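(* Let $p$ be prime, $\mathbf k$ algebraically closed of characteristic $p$, $S=\mathbf k[x,y]$, $\mathfrak m=\langle x,y\rangle$, $d\ge1$ and $c\in C(d,2,p)$. Let $\mathcal Z(c,d)=\{0=t_0<t_1<\dots<t_\ell\}$ and let $\delta_{t_0},\dots,\delta_{t_\ell}$ be the type-$c$ segmentation of $d$. Then $$I_{c,d}=\big(\mathfrak m^{\mathrm{Cont}(\delta_{t_0})}\big)^{[p^{t_0}]}\big(\mathfrak m^{\mathrm{Cont}(\delta_{t_1})}\big)^{[p^{t_1}]}\cdots\big(\mathfrak m^{\mathrm{Cont}(\delta_{t_\ell})}\big)^{[p^{t_\ell}]}.$$ In particular, the minimal monomial generators of $I_{c,d}$ are exactly the monomials $x^ay^{d-a}$ with $a=w_0p^{t_0}+w_1p^{t_1}+\cdots+w_\ell p^{t_\ell}$ for integers $0\le w_r\le\mathrm{Cont}(\delta_{t_r})$.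
   Context: Base-$p$ expansion $d=\sum_{j=0}^Md_jp^j$, $0\le d_j\le p-1$, $d_M\ne0$. The carry pattern $(c_1,\dots,c_M)$ of a monomial $x^ay^b$ of degree $d$ is determined by $\sum_{j<\ell}(a_j+b_j)p^j=c_\ell p^\ell+\sum_{j<\ell}d_jp^j$ for $1\le\ell\le M$ ($a_j,b_j$ base-$p$ digits; $c_i=0$ for $i<1$ or $i>M$). $C(d,2,p)$ is the set of carry patterns of degree-$d$ monomials in two variables, ordered componentwise; $I_{c,d}$ is the ideal generated by all degree-$d$ monomials with carry pattern $\le c$. Define $\mathcal Z(c,d)=\{0\le k\le M: c_k=0,\ (c_{k-1},d_{k-1})\ne(0,p-1)\}$, with the convention that $0\in\mathcal Z(c,d)$; write it as $\{0=t_0<t_1<\dots<t_\ell\}$ and set $t_{\ell+1}=M+1$. For $0\le a$ with base-$p$ digits $a_j$, the $c$-segment of $a$ starting at $t_r$ is $a_{[t_r,t_{r+1})}=(a_{t_r},\dots,a_{t_{r+1}-1})$, and its content is $\mathrm{Cont}(a_{[t_r,t_{r+1})})=\sum_{k=t_r}^{t_{r+1}-1}a_kp^{k-t_r}$. Write $\delta_{t_r}=d_{[t_r,t_{r+1})}$; $\{\delta_{t_0},\dots,\delta_{t_\ell}\}$ is the type-$c$ segmentation of $d$. For an ideal $J=\langle f_1,\dots,f_s\rangle$, $J^{[p^e]}=\langle f_1^{p^e},\dots,f_s^{p^e}\rangle$. *)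

From HB Require Import structures.
From mathcomp Require Import all_boot all_order all_algebra.
From mathcomp Require Import mpoly.
Set Implicit Arguments. Unset Strict Implicit. Unset Printing Implicit Defensive.
Import GRing.Theory.

Section Ideals.
Variable R : comNzRingType.
Local Open Scope ring_scope.

Definition ideal_gen (G : R -> Prop) : R -> Prop :=
  fun f => exists s : seq (R * R),
    (forall u, u \in s -> G u.2) /\ f = \sum_(u <- s) u.1 * u.2.

Definition ideal_unit : R -> Prop := ideal_gen (fun g => g = 1).

Definition ideal_mul (I J : R -> Prop) : R -> Prop :=
  ideal_gen (fun h => exists a b, I a /\ J b /\ h = a * b).

Fixpoint ideal_pow (I : R -> Prop) (n : nat) : R -> Prop :=
  if n is n'.+1 then ideal_mul I (ideal_pow I n') else ideal_unit.

(* Frobenius-type power J^[q]: ideal generated by q-th powers of elements of J.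
   In characteristic p with q = p^e this equals <f_1^q,...,f_s^q> for any
   generating set f_1,...,f_s of J. *)
Definition ideal_frob (J : R -> Prop) (q : nat) : R -> Prop :=
  ideal_gen (fun h => exists f, J f /\ h = f ^+ q).

Local Close Scope ring_scope.
End Ideals.

Unset Implicit Arguments.
Definition xvar (k : fieldType) : {mpoly k[2]} := 'X_(@ord0 1).
Definition yvar (k : fieldType) : {mpoly k[2]} := 'X_(@ord_max 1).

Definition mono (k : fieldType) (i j : nat) : {mpoly k[2]} :=
  (xvar k ^+ i * yvar k ^+ j)%R.

Definition max_ideal (k : fieldType) : {mpoly k[2]} -> Prop :=
  ideal_gen (fun g => g = xvar k \/ g = yvar k).

Definition digit (p n j : nat) : nat := (n %/ p ^ j) %% p.

Definition topidx (p d : nat) : nat := trunc_log p d.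

(* carry pattern of x^a y^(d-a): the number c_l with
   sum_{j<l} (a_j+b_j) p^j = c_l p^l + sum_{j<l} d_j p^j  for 1 <= l <= M,
   and c_l = 0 otherwise *)
Definition carry (p d a l : nat) : nat :=
  if (1 <= l) && (l <= topidx p d) then
    (\sum_(j < l) (digit p a j + digit p (d - a) j) * p ^ j
       - \sum_(j < l) digit p d j * p ^ j) %/ p ^ l
  else 0.

Definition in_carry_patterns (p d : nat) (c : nat -> nat) : Prop :=
  exists a, a <= d /\ forall l, c l = carry p d a l.

Definition carry_le (p d : nat) (c : nat -> nat) (a : nat) : Prop :=
  forall l, carry p d a l <= c l.

Definition Icd (k : fieldType) (p d : nat) (c : nat -> nat) : {mpoly k[2]} -> Prop :=
  ideal_gen (fun g => exists a, a <= d /\ carry_le p d c a /\ g = mono k a (d - a)).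

Definition inZ (p d : nat) (c : nat -> nat) (t : nat) : bool :=
  (t == 0) ||
  [&& 1 <= t, t <= topidx p d, c t == 0 &
      ~~ ((c t.-1 == 0) && (digit p d t.-1 == p.-1))].

Definition Zset (p d : nat) (c : nat -> nat) : seq nat :=
  [seq t <- iota 0 (topidx p d).+1 | inZ p d c t].

Definition nextZ (p d : nat) (c : nat -> nat) (t : nat) : nat :=
  head (topidx p d).+1 [seq u <- Zset p d c | t < u].

Definition Cont (p d : nat) (c : nat -> nat) (t : nat) : nat :=
  \sum_(t <= j < nextZ p d c t) digit p d j * p ^ (j - t).

Definition segprod (k : fieldType) (p d : nat) (c : nat -> nat) : {mpoly k[2]} -> Prop :=
  foldr (fun t J => ideal_mul (ideal_frob (ideal_pow (max_ideal k) (Cont p d c t)) (p ^ t)) J)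
        (ideal_unit (R := {mpoly k[2]})) (Zset p d c).

Definition min_mono_gen (k : fieldType) (I : {mpoly k[2]} -> Prop) (i j : nat) : Prop :=
  I (mono k i j) /\
  forall i' j', i' <= i -> j' <= j -> (i', j') <> (i, j) -> ~ I (mono k i' j').

From HB Require Import structures.
From mathcomp Require Import all_boot all_order all_algebra.
From mathcomp Require Import mpoly.
From mathcomp Require Import zify.
Set Implicit Arguments. Unset Strict Implicit. Unset Printing Implicit Defensive.
Import GRing.Theory.

(* For two variables the carry pattern of x^a y^(d-a) is a 0/1 vector: its l-th entry is
   1 exactly when d mod p^l < a mod p^l.  So "carry pattern <= c" means
   a mod p^l <= d mod p^l at every zero l of c, and it is enough to ask this for l in
   Z(c,d): at a zero l outside Z we have c_(l-1) = 0 and d_(l-1) = p - 1, and then the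
   inequality at l - 1 implies the one at l.  Cutting a at the points of Z, these
   inequalities say that the content of each c-segment of a is at most that of d, i.e.
   a = sum_r w_r p^(t_r) with w_r <= Cont(delta_(t_r)).  On the other side, Frobenius
   powers of monomial ideals are generated by the p^t-th powers of the generators, so
   the segment product is generated by the x^a y^b with a of that shape and
   a + b = sum_r Cont(delta_(t_r)) p^(t_r) = d.  All these generators have degree d,
   hence they are also the minimal ones. *)

Section IdealGen.
Variable R : comNzRingType.
Implicit Types (G H J : R -> Prop) (f g : R).
Local Open Scope ring_scope.

Lemma ideal_gen_sub G g : G g -> ideal_gen G g.
Proof.
by move=> Gg; exists [:: (1, g)]; rewrite big_seq1 mul1r; split=> // u; rewrite inE => /eqP ->.
Qed.

Lemma ideal_gen0 G : ideal_gen G 0.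
Proof. by exists [::]; rewrite big_nil. Qed.

Lemma ideal_genD G f g : ideal_gen G f -> ideal_gen G g -> ideal_gen G (f + g).
Proof.
move=> [s [Gs ->]] [t [Gt ->]]; exists (s ++ t); rewrite big_cat; split=> // u.
by rewrite mem_cat => /orP[/Gs | /Gt].
Qed.

Lemma ideal_genM G r f : ideal_gen G f -> ideal_gen G (r * f).
Proof.
move=> [s [Gs ->]]; exists [seq (r * u.1, u.2) | u <- s]; split.
  by move=> _ /mapP[u /Gs Gu ->].
by rewrite big_map mulr_sumr; apply: eq_bigr => u _; rewrite mulrA.
Qed.

Lemma ideal_gen_min G J :
  J 0 -> (forall f g, J f -> J g -> J (f + g)) -> (forall r f, J f -> J (r * f)) ->
  (forall g, G g -> J g) -> forall f, ideal_gen G f -> J f.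
Proof.
move=> J0 JD JM GJ _ [s [Gs ->]]; elim: s Gs => [|u s IHs] Gs; first by rewrite big_nil.
rewrite big_cons; apply: JD; first by apply/JM/GJ/Gs; rewrite mem_head.
by apply: IHs => v sv; apply: Gs; rewrite inE sv orbT.
Qed.

Lemma ideal_gen_map G H (phi psi : R -> R) :
  phi 0 = 0 -> {morph phi : f g / f + g} -> (forall r f, phi (r * f) = psi r * phi f) ->
  (forall g, G g -> ideal_gen H (phi g)) -> forall f, ideal_gen G f -> ideal_gen H (phi f).
Proof.
move=> phi0 phiD phiM; apply: ideal_gen_min => [|f g Hf Hg|r f Hf].
- by rewrite phi0; apply: ideal_gen0.
- by rewrite phiD; apply: ideal_genD.
- by rewrite phiM; apply: ideal_genM.
Qed.

Lemma ideal_gen_subset G H :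
  (forall g, G g -> ideal_gen H g) -> forall f, ideal_gen G f -> ideal_gen H f.
Proof. exact: (@ideal_gen_map G H id id). Qed.

Lemma ideal_gen_equiv G H :
  (forall g, G g -> ideal_gen H g) -> (forall h, H h -> ideal_gen G h) ->
  forall f, ideal_gen G f <-> ideal_gen H f.
Proof. by move=> GH HG f; split; apply: ideal_gen_subset. Qed.

Lemma ideal_mul_ext I I' J J' : (forall f, I f <-> I' f) -> (forall f, J f <-> J' f) ->
  forall f, ideal_mul I J f <-> ideal_mul I' J' f.
Proof.
move=> II' JJ'; apply: ideal_gen_equiv => _ [a [b [Ia [Jb ->]]]];
  apply: ideal_gen_sub; exists a, b.
  by rewrite -II' -JJ'.
by rewrite II' JJ'.
Qed.

Lemma ideal_frob_ext I I' q : (forall f, I f <-> I' f) ->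
  forall f, ideal_frob I q f <-> ideal_frob I' q f.
Proof.
move=> II'; apply: ideal_gen_equiv => _ [a [Ia ->]]; apply: ideal_gen_sub; exists a.
  by rewrite -II'.
by rewrite II'.
Qed.

Lemma ideal_mul_gen G H f :
  ideal_mul (ideal_gen G) (ideal_gen H) f <->
  ideal_gen (fun h => exists g g', [/\ G g, H g' & h = g * g']) f.
Proof.
apply: ideal_gen_equiv => h; last first.
  move=> [g [g' [Gg Hg' ->]]]; apply: ideal_gen_sub.
  by exists g, g'; split; [exact: ideal_gen_sub | split; first exact: ideal_gen_sub].
move=> [a [b [Ga [Hb ->]]]]; move: a Ga; apply: (ideal_gen_map (psi := id)) => //.
- exact: mul0r.
- by move=> f1 f2; rewrite mulrDl.
- by move=> r f1; rewrite mulrA.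
move=> g Gg; move: b Hb; apply: (ideal_gen_map (psi := id)) => //.
- exact: mulr0.
- by move=> f1 f2; rewrite mulrDr.
- by move=> r f1; rewrite mulrCA.
by move=> g' Hg'; apply: ideal_gen_sub; exists g, g'.
Qed.

Lemma ideal_frob_gen G q f : [pchar R].-nat q ->
  ideal_frob (ideal_gen G) q f <-> ideal_gen (fun h => exists g, G g /\ h = g ^+ q) f.
Proof.
move=> qchar; apply: ideal_gen_equiv => h; last first.
  by move=> [g [Gg ->]]; apply: ideal_gen_sub; exists g; split=> //; exact: ideal_gen_sub.
move=> [a [Ga ->]]; move: a Ga; apply: ideal_gen_map.
- by rewrite expr0n gtn_eqF //; case/andP: qchar.
- by move=> f1 f2; rewrite exprDn_pchar.
- by move=> r f1; rewrite exprMn.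
by move=> g Gg; apply: ideal_gen_sub; exists g.
Qed.

End IdealGen.

Section Monomials.
Variable k : fieldType.
Local Notation K := {mpoly k[2]}.
Implicit Types (P Q : nat -> nat -> Prop) (f : K).

Definition monogen P : K -> Prop := fun h => exists i j, P i j /\ h = mono k i j.

Lemma monoM a b a' b' : (mono k a b * mono k a' b' = mono k (a + a') (b + b'))%R.
Proof. by rewrite /mono !exprD mulrACA. Qed.

Lemma monoX a b q : (mono k a b ^+ q = mono k (a * q) (b * q))%R.
Proof. by rewrite /mono exprMn !exprM. Qed.

Lemma mono00 : mono k 0 0 = 1%R.
Proof. by rewrite /mono !expr0 mulr1. Qed.

Lemma monogen_ext P Q : (forall i j, P i j <-> Q i j) ->
  forall f, ideal_gen (monogen P) f <-> ideal_gen (monogen Q) f.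
Proof.
move=> PQ; apply: ideal_gen_equiv => _ [i [j [Pij ->]]]; apply: ideal_gen_sub; exists i, j.
  by rewrite -PQ.
by rewrite PQ.
Qed.

Lemma ideal_unit_monogen f :
  ideal_unit f <-> ideal_gen (monogen (fun i j => i = 0 /\ j = 0)) f.
Proof.
apply: ideal_gen_equiv => h => [->|[i [j [[-> ->] ->]]]]; apply: ideal_gen_sub.
  by exists 0, 0; rewrite mono00.
by rewrite mono00.
Qed.

Lemma ideal_mul_monogen P Q f :
  ideal_mul (ideal_gen (monogen P)) (ideal_gen (monogen Q)) f <->
  ideal_gen (monogen (fun i j => exists i1 j1 i2 j2,
    [/\ P i1 j1, Q i2 j2, i = i1 + i2 & j = j1 + j2])) f.
Proof.
rewrite ideal_mul_gen; apply: ideal_gen_equiv => h.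
  move=> [_ [_ [[i1 [j1 [P1 ->]]] [i2 [j2 [Q2 ->]]] ->]]]; apply: ideal_gen_sub.
  by exists (i1 + i2), (j1 + j2); rewrite monoM; split=> //; exists i1, j1, i2, j2.
move=> [_ [_ [[i1 [j1 [i2 [j2 [P1 Q2 -> ->]]]]] ->]]]; apply: ideal_gen_sub.
exists (mono k i1 j1), (mono k i2 j2); rewrite monoM.
by split=> //; [exists i1, j1 | exists i2, j2].
Qed.

Lemma ideal_frob_monogen P q f : [pchar K]%R.-nat q ->
  ideal_frob (ideal_gen (monogen P)) q f <->
  ideal_gen (monogen (fun i j => exists i' j', [/\ P i' j', i = i' * q & j = j' * q])) f.
Proof.
move=> qchar; rewrite ideal_frob_gen //; apply: ideal_gen_equiv => h.
  move=> [_ [[i [j [Pij ->]]] ->]]; apply: ideal_gen_sub; rewrite monoX.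
  by exists (i * q), (j * q); split=> //; exists i, j.
move=> [_ [_ [[i [j [Pij -> ->]]] ->]]]; apply: ideal_gen_sub; rewrite -monoX.
by exists (mono k i j); split=> //; exists i, j.
Qed.

Lemma max_ideal_monogen f : max_ideal k f <-> ideal_gen (monogen (fun i j => i + j = 1)) f.
Proof.
apply: ideal_gen_equiv => h.
  by move=> [|] ->; apply: ideal_gen_sub; [exists 1, 0 | exists 0, 1];
    rewrite /mono ?expr0 ?expr1 ?mulr1 ?mul1r.
move=> [i [j [ij ->]]]; apply: ideal_gen_sub; rewrite /mono.
have [[-> ->] | [-> ->]] : (i = 1 /\ j = 0) \/ (i = 0 /\ j = 1) by lia.
  by left; rewrite expr0 expr1 mulr1.
by right; rewrite expr0 expr1 mul1r.
Qed.

Lemma ideal_pow_max_monogen n f :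
  ideal_pow (max_ideal k) n f <-> ideal_gen (monogen (fun i j => i + j = n)) f.
Proof.
elim: n f => [|n IHn] f /=.
  rewrite ideal_unit_monogen; apply: monogen_ext => i j.
  by split=> [[-> ->] | /eqP]; rewrite ?addn_eq0 // => /andP[/eqP -> /eqP ->].
rewrite (ideal_mul_ext max_ideal_monogen IHn) ideal_mul_monogen.
apply: monogen_ext => i j; split=> [[i1 [j1 [i2 [j2 [e1 e2 -> ->]]]]] | ijn]; first by lia.
case: i ijn => [|i] ijn.
  by exists 0, 1, 0, j.-1; split=> //; lia.
by exists 1, 0, i, j; split=> //; lia.
Qed.

Definition mexp (i j : nat) : 'X_{1..2} := (U_(@ord0 1) *+ i + U_(@ord_max 1) *+ j)%MM.

Lemma monoE i j : mono k i j = 'X_[mexp i j].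
Proof. by rewrite /mono /xvar /yvar !mpolyXn mpolyXD. Qed.

Lemma mexp_ord0 i j : mexp i j ord0 = i.
Proof. by rewrite /mexp mnmDE !mulmnE !mnm1E /= mul1n mul0n addn0. Qed.

Lemma mexp_ord_max i j : mexp i j ord_max = j.
Proof. by rewrite /mexp mnmDE !mulmnE !mnm1E /= mul1n mul0n. Qed.

Lemma mcoeff_mul_mono_neq0 (r : K) a b i j :
  ((r * mono k a b)@_(mexp i j) != 0)%R -> a <= i /\ b <= j.
Proof.
rewrite monoE -mcoeff_msupp (perm_mem (msuppMX r (mexp a b))) => /mapP[m _ ij_am].
split.
  have := congr1 (fun m : 'X_{1..2} => m ord0) ij_am.
  by rewrite /= mnmDE !mexp_ord0 => ->; rewrite leq_addr.
have := congr1 (fun m : 'X_{1..2} => m ord_max) ij_am.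
by rewrite /= mnmDE !mexp_ord_max => ->; rewrite leq_addr.
Qed.

(* Compare the coefficients of x^i y^j on both sides. *)
Lemma mono_in_monogen P i j : ideal_gen (monogen P) (mono k i j) ->
  exists a b, [/\ P a b, a <= i & b <= j].
Proof.
move=> [s [Ps E]].
have : ((mono k i j)@_(mexp i j) != 0)%R by rewrite monoE mcoeffX eqxx oner_neq0.
rewrite {}E; elim: s Ps => [|u s IHs] Ps; first by rewrite big_nil mcoeff0 eqxx.
rewrite big_cons mcoeffD.
have [u0 | /[swap] _] := eqVneq ((u.1 * u.2)@_(mexp i j))%R 0%R.
  by rewrite u0 add0r; apply: IHs => v sv; apply: Ps; rewrite inE sv orbT.
have [a [b [Pab ->]]] := Ps u (mem_head _ _).
by move/mcoeff_mul_mono_neq0 => [ai bj]; exists a, b.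
Qed.

Lemma min_mono_gen_monogen (I : K -> Prop) P :
  (forall f, I f <-> ideal_gen (monogen P) f) ->
  (forall i j i' j', P i j -> P i' j' -> i' <= i -> j' <= j -> i' = i /\ j' = j) ->
  forall i j, min_mono_gen k I i j <-> P i j.
Proof.
move=> IP antichain i j; split.
  move=> [/IP/mono_in_monogen[a [b [Pab ai bj]]] min_ij].
  have [[ea eb] | ne] := eqVneq (a, b) (i, j); first by rewrite -ea -eb.
  by case: (min_ij a b ai bj (elimN eqP ne)); apply/IP/ideal_gen_sub; exists a, b.
move=> Pij; split=> [|i' j' ii jj ne /IP/mono_in_monogen[a [b [Pab ai bj]]]].
  by apply/IP/ideal_gen_sub; exists i, j.
have [ea eb] := antichain i j a b Pij Pab (leq_trans ai ii) (leq_trans bj jj).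
by apply: ne; congr pair; lia.
Qed.

End Monomials.

Definition bounded_combination (p : nat) (ts : seq nat) (e : nat -> nat) (a : nat) : Prop :=
  exists w : seq nat,
    size w = size ts /\
    (forall r, r < size w -> nth 0 w r <= e (nth 0 ts r)) /\
    a = \sum_(r < size w) nth 0 w r * p ^ nth 0 ts r.

Section BoundedCombination.
Variables (p : nat) (e : nat -> nat).

Lemma bounded_combination_nil a : bounded_combination p [::] e a <-> a = 0.
Proof.
split=> [[w [/size0nil -> [_ ->]]] | ->]; first by rewrite big_ord0.
by exists [::]; rewrite big_ord0.
Qed.

Lemma bounded_combination_cons t ts a :
  bounded_combination p (t :: ts) e a <->
  exists x b, [/\ x <= e t, bounded_combination p ts e b & a = x * p ^ t + b].
Proof.
split=> [[[|x w] [//= [size_w] [w_le ->]]] | [x [_ [xe [w [size_w [w_le ->]]] ->]]]].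
  exists x, (\sum_(r < size w) nth 0 w r * p ^ nth 0 ts r).
  split; first exact: (w_le 0).
    by exists w; do 2!split=> //; move=> r; apply: (w_le r.+1).
  by rewrite big_ord_recl.
exists (x :: w); split; first by rewrite /= size_w.
split; last by rewrite big_ord_recl.
by case=> [|r] //=; rewrite ltnS; apply: w_le.
Qed.

Lemma bounded_combination_le ts a :
  bounded_combination p ts e a -> a <= \sum_(t <- ts) e t * p ^ t.
Proof.
elim: ts a => [|t ts IHts] a; first by move/bounded_combination_nil ->.
move/bounded_combination_cons=> [x [b [xe /IHts b_le ->]]].
by rewrite big_cons leq_add // leq_mul2r xe orbT.
Qed.

End BoundedCombination.

Lemma prod_frob_pow_max_monogen (k : fieldType) p e ts (f : {mpoly k[2]}) :
  (p \in [pchar k])%R ->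
  foldr (fun t J => ideal_mul (ideal_frob (ideal_pow (max_ideal k) (e t)) (p ^ t)) J)
        (ideal_unit (R := {mpoly k[2]})) ts f <->
  ideal_gen (@monogen k (fun i j =>
    i + j = \sum_(t <- ts) e t * p ^ t /\ bounded_combination p ts e i)) f.
Proof.
move=> p_char; have pK : (p \in [pchar {mpoly k[2]}])%R := rmorph_pchar (@mpolyC 2 k) p_char.
elim: ts f => [|t ts IHts] f /=.
  rewrite ideal_unit_monogen; apply: monogen_ext => i j.
  rewrite big_nil bounded_combination_nil; lia.
have frob_pow g : ideal_frob (ideal_pow (max_ideal k) (e t)) (p ^ t) g <->
    ideal_gen (@monogen k (fun i j => exists i' j',
      [/\ i' + j' = e t, i = i' * p ^ t & j = j' * p ^ t])) g.
  rewrite (ideal_frob_ext _ (@ideal_pow_max_monogen k (e t))) ideal_frob_monogen //.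
  by rewrite (eq_pnat _ (pcharf_eq pK)) pnatX pnat_id ?(pcharf_prime pK).
rewrite (ideal_mul_ext frob_pow IHts) ideal_mul_monogen.
apply: monogen_ext => i j; rewrite big_cons bounded_combination_cons; split.
  move=> [_ [_ [i2 [j2 [[i' [j' [ij' -> ->]]] [ij2 bc2] -> ->]]]]].
  split; last by exists i', i2; split=> //; lia.
  by rewrite -ij' mulnDl; lia.
move=> [ij [x [b [xe bc def_i]]]]; subst i.
have b_le := bounded_combination_le bc.
have xp_le : x * p ^ t <= e t * p ^ t by rewrite leq_mul2r xe orbT.
exists (x * p ^ t), ((e t - x) * p ^ t), b, (\sum_(t <- ts) e t * p ^ t - b).
split=> //; first by exists x, (e t - x); split=> //; lia.
  by split=> //; lia.
by rewrite mulnBl; lia.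
Qed.

Lemma modn_exp_split p n t t' : t <= t' ->
  n %% p ^ t' = n %% p ^ t' %/ p ^ t * p ^ t + n %% p ^ t.
Proof.
move=> le_tt'; rewrite {1}(divn_eq (n %% p ^ t') (p ^ t)); congr (_ + _).
by rewrite (modn_dvdm _ (dvdn_exp2l p le_tt')).
Qed.

Lemma divn_addn_lt A B P : A < P -> B < P -> (A + B) %/ P = ((A + B) %% P < A).
Proof.
move=> AP BP; have P_gt0 : 0 < P by lia.
have := divn_eq (A + B) P; have := ltn_pmod (A + B) P_gt0.
have : (A + B) %/ P < 2 by rewrite ltn_divLR //; lia.
case: ((A + B) %/ P) => [|[|//]] _ lt_mod sum_eq.
  by have -> : ((A + B) %% P < A) = false by apply/negbTE; rewrite -leqNgt; lia.
by have -> : (A + B) %% P < A by lia.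
Qed.

Section Digits.
Variable p : nat.
Hypothesis p_gt1 : 1 < p.

Lemma digit_mod n l : digit p n l = n %% p ^ l.+1 %/ p ^ l.
Proof. by rewrite /digit modn_divl expnS. Qed.

Lemma digit_sum_mod n l : \sum_(j < l) digit p n j * p ^ j = n %% p ^ l.
Proof.
elim: l => [|l IHl]; first by rewrite big_ord0 expn0 modn1.
by rewrite big_ord_recr /= IHl digit_mod addnC -modn_exp_split.
Qed.

Lemma digit_sum_seg n t t' : t <= t' ->
  \sum_(t <= j < t') digit p n j * p ^ (j - t) = n %% p ^ t' %/ p ^ t.
Proof.
move=> le_tt'; have pt_gt0 : 0 < p ^ t by rewrite expn_gt0 ltnW.
have -> : n %% p ^ t' =
    (\sum_(t <= j < t') digit p n j * p ^ (j - t)) * p ^ t + n %% p ^ t.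
  rewrite -!digit_sum_mod -!(big_mkord xpredT (fun j => digit p n j * p ^ j)).
  rewrite (big_cat_nat (leq0n t) le_tt') /= addnC big_distrl /=; congr (_ + _).
  by rewrite !big_nat; apply: eq_bigr => j /andP[tj _]; rewrite -mulnA -expnD subnK.
by rewrite divnMDl // divn_small ?addn0 // ltn_pmod.
Qed.

Lemma ltn_exp_topidx d l : topidx p d < l -> d < p ^ l.
Proof. by move=> Ml; apply: leq_trans (trunc_log_ltn d p_gt1) _; rewrite leq_exp2l. Qed.

Lemma carryE d a l : a <= d -> carry p d a l = (d %% p ^ l < a %% p ^ l).
Proof.
move=> le_ad; have pl_gt0 : 0 < p ^ l by rewrite expn_gt0 ltnW.
rewrite /carry; case: ifP => [_ | l_out].
  rewrite (eq_bigr _ (fun j _ => mulnDl _ _ _)) big_split /= !digit_sum_mod.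
  have -> : d %% p ^ l = (a %% p ^ l + (d - a) %% p ^ l) %% p ^ l by rewrite modnDm subnKC.
  set s := _ + _; rewrite {1}(divn_eq s (p ^ l)) addnK mulnK //.
  by apply: divn_addn_lt; rewrite ltn_pmod.
case: l l_out pl_gt0 => [|l] l_out _; first by rewrite expn0 !modn1.
have d_lt : d < p ^ l.+1 by apply: ltn_exp_topidx; move: l_out => /= /negbT; rewrite -ltnNge.
by rewrite !modn_small ?(leq_ltn_trans le_ad) // ltnNge le_ad.
Qed.

End Digits.

Section Segments.
Variables (p : nat) (T : nat -> nat).
Hypotheses (p_gt0 : 0 < p) (T0 : T 0 = 0) (T_homo : {homo T : m n / m <= n}).

Definition seg_content n r := n %% p ^ T r.+1 %/ p ^ T r.

Lemma sum_seg_content n s : \sum_(r < s) seg_content n r * p ^ T r = n %% p ^ T s.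
Proof.
elim: s => [|s IHs]; first by rewrite big_ord0 T0 expn0 modn1.
by rewrite big_ord_recr /= IHs addnC -modn_exp_split // T_homo.
Qed.

Lemma sum_le_seg_content b s (w : nat -> nat) :
  (forall r, r < s -> w r <= seg_content b r) -> \sum_(r < s) w r * p ^ T r <= b %% p ^ T s.
Proof.
move=> w_le; rewrite -sum_seg_content; apply: leq_sum => r _.
by rewrite leq_mul2r w_le ?orbT.
Qed.

Lemma modn_sum_seg b s (w : nat -> nat) r0 : r0 <= s ->
  (forall r, r < s -> w r <= seg_content b r) ->
  (\sum_(r < s) w r * p ^ T r) %% p ^ T r0 = \sum_(r < r0) w r * p ^ T r.
Proof.
move=> r0s w_le; rewrite -!(big_mkord xpredT (fun r => w r * p ^ T r)).
rewrite (big_cat_nat (leq0n r0) r0s) /=.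
have /dvdnP[q ->] : p ^ T r0 %| \sum_(r0 <= r < s) w r * p ^ T r.
  by rewrite big_nat; apply: dvdn_sum => r /andP[r0r _]; apply/dvdn_mull/dvdn_exp2l/T_homo.
rewrite addnC modnMDl modn_small // big_mkord.
apply: leq_ltn_trans (sum_le_seg_content (b := b) _) (ltn_pmod _ _).
  by move=> r rr0; apply: w_le; apply: leq_trans rr0 r0s.
by rewrite expn_gt0 p_gt0.
Qed.

Lemma mod_le_iff_seg_combination a b s : a < p ^ T s ->
  (forall r, r <= s -> a %% p ^ T r <= b %% p ^ T r) <->
  exists w : nat -> nat,
    (forall r, r < s -> w r <= seg_content b r) /\ a = \sum_(r < s) w r * p ^ T r.
Proof.
move=> a_lt; split=> [mod_le | [w [w_le ->]] r rs].
  exists (seg_content a); split; last by rewrite sum_seg_content modn_small.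
  by move=> r rs; apply/leq_div2r/mod_le.
rewrite (modn_sum_seg (b := b)) //; apply: sum_le_seg_content => r' r'r.
by apply: w_le; apply: leq_trans r'r rs.
Qed.

End Segments.

Lemma filter_gt_nth (s : seq nat) r : sorted ltn s -> r < size s ->
  [seq u <- s | nth 0 s r < u] = drop r.+1 s.
Proof.
elim: s r => [|x s IHs] [|r] //= s_sorted r_lt.
  by rewrite ltnn drop0; apply/all_filterP; apply: order_path_min s_sorted; apply: ltn_trans.
have x_lt : x < nth 0 s r.
  by have /allP := order_path_min ltn_trans s_sorted; apply; apply: mem_nth.
by rewrite ltnNge ltnW //= IHs // (path_sorted s_sorted).
Qed.

Section Zset.
Variables (p d : nat) (c : nat -> nat).
Hypothesis p_gt1 : 1 < p.
Local Notation M := (topidx p d).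
Local Notation Z := (Zset p d c).
Local Notation T := (nth M.+1 Z). (* t_r, including t_(ell+1) = M + 1 *)

Lemma mem_Zset t : (t \in Z) = inZ p d c t && (t <= M).
Proof. by rewrite mem_filter mem_iota add0n ltnS. Qed.

Lemma Zset_sorted : sorted ltn Z.
Proof. by apply: sorted_filter; [exact: ltn_trans | exact: iota_ltn_sorted]. Qed.

Lemma Zset_nth0 : T 0 = 0.
Proof. by []. Qed.

Lemma Zset_nth_homo : {homo T : m n / m <= n}.
Proof.
move=> m n le_mn; have [n_lt | n_ge] := ltnP n (size Z).
  apply: (sorted_leq_nth leq_trans leqnn) (leq_ltn_trans le_mn n_lt) n_lt le_mn.
  by apply: sorted_filter; [exact: leq_trans | exact: iota_sorted].
rewrite (nth_default _ n_ge); have [m_lt | m_ge] := ltnP m (size Z); last by rewrite nth_default.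
by apply: ltnW; rewrite ltnS; have := mem_nth M.+1 m_lt; rewrite mem_Zset => /andP[].
Qed.

Lemma Cont_seg_content r : r < size Z -> Cont p d c (nth 0 Z r) = seg_content p T d r.
Proof.
move=> r_lt; rewrite /Cont /nextZ filter_gt_nth ?Zset_sorted // -nth0 nth_drop addn0.
by rewrite (set_nth_default M.+1 0 r_lt) digit_sum_seg // Zset_nth_homo.
Qed.

Lemma sum_Cont : \sum_(t <- Z) Cont p d c t * p ^ t = d.
Proof.
rewrite (big_nth 0) big_mkord.
rewrite (eq_bigr (fun r : 'I_(size Z) => seg_content p T d r * p ^ T r)) => [|r _]; last first.
  by rewrite Cont_seg_content // (set_nth_default M.+1 0 (ltn_ord r)).
rewrite (sum_seg_content p Zset_nth0 Zset_nth_homo).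
by rewrite nth_default // modn_small // ltn_exp_topidx.
Qed.

Lemma carry_le_mod a : a <= d ->
  carry_le p d c a <-> (forall l, c l = 0 -> a %% p ^ l <= d %% p ^ l).
Proof.
move=> le_ad; split=> [carry_a l cl | mod_le l].
  by move: (carry_a l); rewrite carryE // cl leqn0 eqb0 -leqNgt.
rewrite carryE //; case cl: (c l) => [|n]; first by rewrite leqn0 eqb0 -leqNgt mod_le.
exact: leq_trans (leq_b1 _) _.
Qed.

(* A zero l of c outside Z has c (l - 1) = 0 and d_(l-1) = p - 1; then the condition
   at l follows from the one at l - 1, since no digit of a exceeds p - 1. *)
Lemma mod_le_zeros_Zset a : a <= d ->
  (forall l, c l = 0 -> a %% p ^ l <= d %% p ^ l) <->
  (forall t, t \in Z -> a %% p ^ t <= d %% p ^ t).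
Proof.
move=> le_ad; split=> [mod_le t | mod_le].
  rewrite mem_Zset /inZ => /andP[/orP[/eqP -> | /and4P[_ _ /eqP ct _]] _] //.
    by rewrite expn0 !modn1.
  exact: mod_le.
elim=> [|l IHl] cl; first by rewrite expn0 !modn1.
have [lM | Ml] := leqP l.+1 M; last first.
  by rewrite !modn_small ?(leq_ltn_trans le_ad) ?ltn_exp_topidx.
have [Zl | ] := boolP (inZ p d c l.+1); first by apply: mod_le; rewrite mem_Zset Zl.
rewrite /inZ /= lM cl eqxx /= negbK => /andP[/eqP cl' /eqP dl].
rewrite (modn_exp_split p a (leqnSn l)) (modn_exp_split p d (leqnSn l)) -!digit_mod dl.
rewrite leq_add ?IHl // leq_mul2r -ltnS prednK ?(ltnW p_gt1) //.
by rewrite /digit ltn_pmod ?orbT // ltnW.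
Qed.

Lemma carry_le_Zset a : a <= d ->
  carry_le p d c a <-> (forall r, r <= size Z -> a %% p ^ T r <= d %% p ^ T r).
Proof.
move=> le_ad; rewrite carry_le_mod // mod_le_zeros_Zset //.
split=> [mod_le r rZ | mod_le t tZ].
  have [r_lt | r_ge] := ltnP r (size Z); first by apply: mod_le; apply: mem_nth.
  by rewrite nth_default // !modn_small ?(leq_ltn_trans le_ad) ?ltn_exp_topidx.
by rewrite -(nth_index M.+1 tZ); apply: mod_le; rewrite ltnW // index_mem.
Qed.

Lemma bounded_combination_Zset a :
  (a <= d /\ carry_le p d c a) <-> bounded_combination p Z (Cont p d c) a.
Proof.
have sum_nth (w : seq nat) : size w = size Z ->
    \sum_(r < size w) nth 0 w r * p ^ nth 0 Z r = \sum_(r < size Z) nth 0 w r * p ^ T r.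
  by move=> ->; apply: eq_bigr => r _; rewrite (set_nth_default M.+1 0 (ltn_ord r)).
have seg_Z := mod_le_iff_seg_combination (ltnW p_gt1) Zset_nth0 Zset_nth_homo.
have lt_top x : x <= d -> x < p ^ T (size Z).
  by move=> le_xd; rewrite nth_default // (leq_ltn_trans le_xd) ?ltn_exp_topidx.
split=> [[le_ad carry_a] | [w [size_w [w_le def_a]]]].
  have [w [w_le ->]] := (seg_Z a d _ (lt_top a le_ad)).1 ((carry_le_Zset le_ad).1 carry_a).
  exists (mkseq w (size Z)); rewrite sum_nth ?size_mkseq //.
  split=> //; split=> [r r_lt | ]; first by rewrite nth_mkseq // Cont_seg_content // w_le.
  by apply: eq_bigr => r _; rewrite nth_mkseq.
have w_seg r : r < size Z -> nth 0 w r <= seg_content p T d r.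
  by move=> r_lt; rewrite -Cont_seg_content // w_le // size_w.
have le_ad : a <= d.
  rewrite def_a sum_nth //; apply: leq_trans (leq_mod d (p ^ T (size Z))).
  exact: sum_le_seg_content Zset_nth0 Zset_nth_homo _ _ _ w_seg.
split=> //; apply/(carry_le_Zset le_ad)/(seg_Z _ _ _ (lt_top a le_ad)).
by exists (nth 0 w); rewrite def_a sum_nth.
Qed.

End Zset.

Theorem mainTheorem10 (k : closedFieldType) (p d : nat) (c : nat -> nat) :
  prime p -> (p \in [pchar k])%R -> 1 <= d -> in_carry_patterns p d c ->
  (forall f : {mpoly k[2]}, Icd k p d c f <-> segprod k p d c f) /\
  (forall i j : nat,
     min_mono_gen k (Icd k p d c) i j <->
     (i + j = d /\
      exists w : seq nat,
        size w = size (Zset p d c) /\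
        (forall r, r < size w -> nth 0 w r <= Cont p d c (nth 0 (Zset p d c) r)) /\
        i = \sum_(r < size w) nth 0 w r * p ^ nth 0 (Zset p d c) r)).
Proof.
move=> p_prime p_char _ _; have p_gt1 := prime_gt1 p_prime.
have bcE := bounded_combination_Zset d c p_gt1.
pose Q i j := i + j = d /\ bounded_combination p (Zset p d c) (Cont p d c) i.
have IcdE f : Icd k p d c f <-> ideal_gen (@monogen k Q) f.
  apply: ideal_gen_equiv => h.
    move=> [a [le_ad [carry_a ->]]]; apply: ideal_gen_sub; exists a, (d - a).
    by split=> //; split; [rewrite subnKC | apply/bcE].
  move=> [i [j [[ij /bcE[le_id carry_i]] ->]]].
  by apply: ideal_gen_sub; exists i; do 2!split=> //; rewrite -ij addKn.
split=> f; first by rewrite IcdE /segprod prod_frob_pow_max_monogen // sum_Cont.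
apply: (min_mono_gen_monogen IcdE) => i j i' j' [ij _] [ij' _] le_i le_j; lia.
Qed.
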